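(* Let $T,M,\delta,\tau$ be as in the setup and $\xi>0$. Consider the Batch procedure: set $W=W'=V_T$; while $W'\neq\emptyset$: let $L(W')=\{v\in W':C_{W'}(v)\le k(1+\xi)\tau(W')/|W'|\}$, set $W'\leftarrow W'\setminus L(W')$, and if $W'\neq\emptyset$ and $\rho(W')\ge\rho(W)$ set $W\leftarrow W'$. Output $W$. Then in every iteration $L(W')\neq\emptyset$ (so the procedure terminates), and the output satisfies $\rho(W)\ge\frac{1}{k(1+\xi)}\mathrm{OPT}$.
   Context: Setup. A temporal network is a pair $T=(V_T,E_T)$ where $V_T$ is a finite set of $n$ vertices and $E_T$ is a finite set of temporal edges $(u,v,t)$ with $u,v\in V_T$ and timestamp $t\in\mathbb{R}_{>0}$; timestamps are assumed distinct. A $k$-vertex $\ell$-edge temporal motif ($k,\ell\ge 2$) is a pair $M=(K,\sigma)$ where $K=(V_K,E_K)$ is a directed, weakly connected multigraph with $|V_K|=k$, $|E_K|=\ell$, and $\sigma$ is an ordering of $E_K$; equivalently $M$ is the sequence $\langle(x_1,y_1),\dots,(x_\ell,y_\ell)\rangle$ of its edges in the order $\sigma$. Given $\delta>0$, a $\delta$-instance of $M$ in a temporal network is a sequence $S=\langle(x'_1,y'_1,t'_1),\dots,(x'_\ell,y'_\ell,t'_\ell)\rangle$ of $\ell$ distinct temporal edges of that network with $t'_1<\dots<t'_\ell$ such that (1) there is a bijection $h$ from the set of vertices appearing in $S$ onto $V_K$ with $h(x'_i)=x_i$ and $h(y'_i)=y_i$ for all $i\in[\ell]$, and (2) $t'_\ell-t'_1\le\delta$.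 We write $v\in S$ if $v$ is an endpoint of some edge of $S$; every $\delta$-instance contains exactly $k$ vertices. For $W\subseteq V_T$, $T[W]=(W,\{(u,v,t)\in E_T:u,v\in W\})$ is the induced temporal subnetwork and $\mathcal{S}_W$ is the set of $\delta$-instances of $M$ in $T[W]$. A weighting function $\tau$ assigns a weight $\tau(S)>0$ to each $\delta$-instance $S$ of $M$ in $T$; for $W\subseteq V_T$, $\tau(W)=\sum_{S\in\mathcal{S}_W}\tau(S)$. The temporal motif degree of $v$ in $T[W]$ is $C_W(v)=\sum_{S\in\mathcal{S}_W:\,v\in S}\tau(S)$. The density of a nonempty $W\subseteq V_T$ is $\rho(W)=\tau(W)/|W|$, and $\mathrm{OPT}=\max_{\emptyset\ne W\subseteq V_T}\rho(W)$ is the optimal value of the Temporal Motif Densest Subnetwork (TMDS) problem. *)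

From HB Require Import structures.
From mathcomp Require Import all_boot all_order all_algebra.
Set Implicit Arguments. Unset Strict Implicit. Unset Printing Implicit Defensive.
Import Order.TTheory GRing.Theory Num.Theory.
Local Open Scope ring_scope.

(* A temporal network on vertex type V (finite) is given by a finite type E of
   temporal edges with source, target and timestamp maps.  Distinct timestamps
   = injectivity of [time]; positive timestamps are assumed in the theorem. *)

Definition motif_weakly_connected (k l : nat) (mot : l.-tuple ('I_k * 'I_k)) : bool :=
  [forall a : 'I_k, forall b : 'I_k,
    connect [rel x y | ((x, y) \in mot) || ((y, x) \in mot)] a b].

Section TMDS.
Variables (V E : finType) (R : realFieldType).
Variables (src dst : E -> V) (time : E -> R).
Variables (k l : nat) (mot : l.-tuple ('I_k * 'I_k)) (delta : R).
Variable (tau : l.-tuple E -> R).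

Definition vertS (S : l.-tuple E) : {set V} :=
  [set v | has (fun e => (src e == v) || (dst e == v)) S].

Definition is_instance (S : l.-tuple E) : bool :=
  [&& [forall i : 'I_l, forall j : 'I_l,
         (i < j)%N ==> (time (tnth S i) < time (tnth S j))],
      (* t'_l - t'_1 <= delta  (stated for all pairs; equivalent given the order) *)
      [forall i : 'I_l, forall j : 'I_l,
         time (tnth S j) - time (tnth S i) <= delta] &
      [exists h : {ffun V -> 'I_k},
        [&& [forall i : 'I_l,
               (h (src (tnth S i)) == (tnth mot i).1) &&
               (h (dst (tnth S i)) == (tnth mot i).2)],
            [forall v in vertS S, forall w in vertS S, (h v == h w) ==> (v == w)] &
            [forall j : 'I_k, exists v in vertS S, h v == j]]]].

Definition tauW (W : {set V}) : R :=
  \sum_(S : l.-tuple E | is_instance S && (vertS S \subset W)) tau S.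

Definition degW (W : {set V}) (v : V) : R :=
  \sum_(S : l.-tuple E | [&& is_instance S, vertS S \subset W & v \in vertS S]) tau S.

Definition rho (W : {set V}) : R := tauW W / (#|W|%:R).

Variable xi : R.

Definition Lset (W' : {set V}) : {set V} :=
  [set v in W' | degW W' v <= (k%:R * (1 + xi)) * tauW W' / (#|W'|%:R)].

(* One iteration of the Batch loop on the state (W, W'); once W' is empty the
   loop has stopped, so the state is left unchanged. *)
Definition batch_step (s : {set V} * {set V}) : {set V} * {set V} :=
  let: (W, W') := s in
  if W' == set0 then (W, W') else
  let W'' := W' :\: Lset W' in
  if (W'' != set0) && (rho W <= rho W'') then (W'', W'') else (W, W'').

Definition batch_state (n : nat) : {set V} * {set V} :=
  iter n batch_step (setT, setT).

End TMDS.

From HB Require Import structures.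
From mathcomp Require Import all_boot all_order all_algebra.
From mathcomp Require Import lra.
Set Implicit Arguments. Unset Strict Implicit. Unset Printing Implicit Defensive.
Import Order.TTheory GRing.Theory Num.Theory.
Local Open Scope ring_scope.

(* Every instance has at most k vertices, so the degrees in W' sum to at most
   k tau(W'); some vertex therefore has degree at most k tau(W')/|W'|, L(W') is
   nonempty and W' shrinks at each iteration.  In a densest set D every vertex
   has degree at least rho(D), since removing it cannot increase the density.
   At the first iteration that removes a vertex v of D we still have D within
   W', so rho(D) <= C_D(v) <= C_W'(v) <= k(1+xi) rho(W'), and rho(W') is at
   most the density of the current, hence of the final, W. *)

Lemma exists_exit_step (P : pred nat) n :
  P 0 -> ~~ P n -> exists2 m, (m < n)%N & P m && ~~ P m.+1.
Proof.
move=> P0; elim: n => [|n IHn] notPn; first by rewrite P0 in notPn.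
have [Pn | /IHn [m ltmn Pm]] := boolP (P n); first by exists n; rewrite ?Pn.
by exists m; rewrite // ltnW.
Qed.

Section Degrees.
Variables (V E : finType) (R : realFieldType).
Variables (src dst : E -> V) (time : E -> R).
Variables (k l : nat) (mot : l.-tuple ('I_k * 'I_k)) (delta : R).
Variable (tau : l.-tuple E -> R).
Hypothesis tau_gt0 : forall S, is_instance src dst time mot delta S -> 0 < tau S.
Hypothesis l_gt0 : (0 < l)%N.

Local Notation instance := (is_instance src dst time mot delta).
Local Notation vertS := (@vertS V E src dst l).
Local Notation tauW := (tauW src dst time mot delta tau).
Local Notation degW := (degW src dst time mot delta tau).
Local Notation rho := (rho src dst time mot delta tau).

Let tau_ge0 S : instance S -> 0 <= tau S.
Proof. by move/tau_gt0/ltW. Qed.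

Lemma card_vertS_le S : instance S -> (#|vertS S| <= k)%N.
Proof.
case/and3P=> _ _ /existsP [h /and3P [_ /forall_inP h_inj _]].
rewrite -[k]card_ord; apply: (leq_card_in h) => v w vS wS /eqP hvw.
by move/forall_inP: (h_inj v vS) => /(_ w wS) /implyP /(_ hvw) /eqP.
Qed.

Lemma vertS_neq0 S : vertS S != set0.
Proof.
pose e := tnth S (Ordinal l_gt0).
by apply/set0Pn; exists (src e); rewrite inE; apply/hasP; exists e; rewrite ?mem_tnth ?eqxx.
Qed.

Lemma tauW0 : tauW set0 = 0.
Proof. by rewrite /tauW big_pred0 // => S; rewrite subset0 (negbTE (vertS_neq0 S)) andbF. Qed.

Lemma tauW_ge0 (W : {set V}) : 0 <= tauW W.
Proof. by apply: sumr_ge0 => S /andP [/tau_ge0]. Qed.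

Lemma sum_degW_le (W : {set V}) : \sum_(v in W) degW W v <= k%:R * tauW W.
Proof.
rewrite /degW /tauW.
under eq_bigr => v _ do rewrite (big_mkcond (fun S => [&& instance S, _ & _])).
rewrite exchange_big big_distrr [leRHS]big_mkcond /=; apply: ler_sum => S _.
case: (boolP (instance S && (vertS S \subset W))) => [/andP [iS sSW] | notS].
  rewrite -big_mkcondr sumr_const mulr_natl ler_wpMn2l //; first exact: tau_ge0.
  apply: leq_trans (card_vertS_le iS); apply: subset_leq_card.
  by apply/subsetP => v; rewrite unfold_in => /and4P [].
by rewrite big1 // => v _; move: notS; case: (instance S); case: (_ \subset W).
Qed.

Lemma degWS (W1 W2 : {set V}) v : W1 \subset W2 -> degW W1 v <= degW W2 v.
Proof.
move=> sW12; rewrite /degW [leRHS]big_mkcond [leLHS]big_mkcond; apply: ler_sum => S _.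
case iS: (instance S); case: (v \in vertS S); rewrite ?andbF //=.
case: (boolP (vertS S \subset W1)) => [sS1 | _]; first by rewrite (subset_trans sS1 sW12).
by case: ifP => // _; exact: tau_ge0.
Qed.

Lemma tauW_le_degWD1 (W : {set V}) v : tauW W <= degW W v + tauW (W :\ v).
Proof.
rewrite /tauW /degW (bigID (fun S => v \in vertS S)) /=; apply: lerD.
- by rewrite le_eqVlt (eq_bigl _ _ (fun S => andbA _ _ _)) eqxx.
- rewrite [leRHS]big_mkcond [leLHS]big_mkcond; apply: ler_sum => S _.
  case iS: (instance S); rewrite //=.
  case: (boolP (vertS S \subset W)) => [sSW | _]; last by case: ifP => // _; exact: tau_ge0.
  have [vS | vS] := boolP (v \in vertS S); first by case: ifP => // _; exact: tau_ge0.
  suff -> : vertS S \subset W :\ v by [].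
  apply/subsetP => w wS; rewrite !inE (subsetP sSW _ wS) andbT.
  by apply: contraNneq vS => <-.
Qed.

Lemma rho_le_degW_max (Wmax : {set V}) v :
  (forall W, W != set0 -> rho W <= rho Wmax) -> v \in Wmax -> rho Wmax <= degW Wmax v.
Proof.
move=> Wmax_max vW; have := tauW_le_degWD1 Wmax v.
have card_Wmax : #|Wmax| = #|Wmax :\ v|.+1 by rewrite (cardsD1 v) vW.
have tauW_Wmax : tauW Wmax = rho Wmax * #|Wmax :\ v|.+1%:R.
  by rewrite /rho card_Wmax divfK // pnatr_eq0.
have tauW_D1 : tauW (Wmax :\ v) <= rho Wmax * #|Wmax :\ v|%:R.
  have [-> | WD1_neq0] := eqVneq (Wmax :\ v) set0.
    by rewrite tauW0 cards0 mulr0.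
  have := Wmax_max _ WD1_neq0; rewrite /rho ler_pdivrMr // ltr0n card_gt0 //.
rewrite tauW_Wmax -natr1 mulrDr mulr1; lra.
Qed.

Section Batch.
Variable xi : R.
Hypothesis xi_ge0 : 0 <= xi.

Local Notation Lset := (Lset src dst time mot delta tau xi).
Local Notation batch_state := (batch_state src dst time mot delta tau xi).

Lemma Lset_sub (W : {set V}) : Lset W \subset W.
Proof. by apply/subsetP => v; rewrite inE => /andP []. Qed.

Lemma Lset_neq0 (W : {set V}) : W != set0 -> Lset W != set0.
Proof.
move=> W_neq0; apply/negP => /eqP L0.
have notL v : v \notin Lset W by rewrite L0 inE.
have cardW_gt0 : (0 < #|W|)%N by rewrite card_gt0.
have : \sum_(v in W) (k%:R * (1 + xi) * tauW W / #|W|%:R) < \sum_(v in W) degW W v.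
  apply: ltr_sum => [|v vW].
    by case/set0Pn: W_neq0 => v vW; apply/hasP; exists v; rewrite ?mem_index_enum.
  by have := notL v; rewrite inE vW /= -ltNge.
rewrite sumr_const -[_ *+ #|W|]mulr_natr divfK ?pnatr_eq0 -?lt0n // => lt_sum.
have := lt_le_trans lt_sum (sum_degW_le W).
have : 0 <= k%:R * tauW W * xi by rewrite mulr_ge0 ?mulr_ge0 ?tauW_ge0.
rewrite mulrDr mulr1 mulrDl; lra.
Qed.

Lemma batch_stateS n :
  batch_state n.+1 = batch_step src dst time mot delta tau xi (batch_state n).
Proof. by rewrite /batch_state iterS. Qed.

Lemma batch_state2S n : (batch_state n.+1).2 =
  if (batch_state n).2 == set0 then set0 else (batch_state n).2 :\: Lset (batch_state n).2.
Proof.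
rewrite batch_stateS; case: (batch_state n) => W W' /=.
by have [-> // | _] := eqVneq W' set0; case: ifP.
Qed.

Lemma batch_state2_proper n :
  (batch_state n).2 != set0 -> (batch_state n.+1).2 \proper (batch_state n).2.
Proof.
move=> W'_neq0; rewrite batch_state2S (negbTE W'_neq0).
case/set0Pn: (Lset_neq0 W'_neq0) => v vL; apply/properP; split; first exact: subsetDl.
by exists v; [exact: subsetP (Lset_sub _) _ vL | rewrite inE vL].
Qed.

Lemma card_batch_state2 n :
  (batch_state n).2 = set0 \/ (#|(batch_state n).2| + n <= #|V|)%N.
Proof.
elim: n => [|n [IHn | IHn]]; first by right; rewrite addn0 cardsT.
  by left; rewrite batch_state2S IHn eqxx.
have [-> | W'_neq0] := eqVneq (batch_state n.+1).2 set0; first by left.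
right; apply: leq_trans IHn; rewrite addnS ltn_add2r proper_card //.
apply: batch_state2_proper; apply: contraNneq W'_neq0 => W'0.
by rewrite batch_state2S W'0 eqxx.
Qed.

Lemma batch_terminates : (batch_state #|V|).2 = set0.
Proof.
have [// | card_le] := card_batch_state2 #|V|.
by apply/eqP; rewrite -cards_eq0 -leqn0 -(leq_add2r #|V|).
Qed.

Lemma rho_batch_state2_le n :
  (batch_state n).2 != set0 -> rho (batch_state n).2 <= rho (batch_state n).1.
Proof.
elim: n => [_ | n IHn]; first exact: lexx.
rewrite batch_stateS; case: (batch_state n) IHn => W W' /= IHn.
have [-> /= /eqP // | W'_neq0] := eqVneq W' set0.
case: ifP => [_ _ | /negbT]; first exact: lexx.
by rewrite negb_and negbK -ltNge => /orP [-> // | /ltW].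
Qed.

Lemma rho_batch_state1_homo :
  {homo (fun n => rho (batch_state n).1) : m n / (m <= n)%N >-> m <= n}.
Proof.
apply: homo_leq => [x | y x z | n]; [exact: lexx | exact: le_trans |].
rewrite batch_stateS; case: (batch_state n) => W W' /=.
have [_ | _] := eqVneq W' set0; first exact: lexx.
by case: ifP => [/andP [_ ->] // | _]; exact: lexx.
Qed.

Lemma degW_removed_le n v : v \in (batch_state n).2 -> v \notin (batch_state n.+1).2 ->
  degW (batch_state n).2 v <= k%:R * (1 + xi) * rho (batch_state n).2.
Proof.
move=> vW'; have W'_neq0 : (batch_state n).2 != set0 by apply/set0Pn; exists v.
by rewrite batch_state2S (negbTE W'_neq0) !inE vW' andbT negbK => /andP [_]; rewrite mulrA.
Qed.

Lemma rho_max_le_batch (Wmax : {set V}) n :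
  Wmax != set0 -> (forall W, W != set0 -> rho W <= rho Wmax) ->
  (batch_state n).2 = set0 -> rho Wmax <= k%:R * (1 + xi) * rho (batch_state n).1.
Proof.
move=> Wmax_neq0 Wmax_max W'n0.
have Wmax_out : ~~ (Wmax \subset (batch_state n).2) by rewrite W'n0 subset0.
have [m le_mn /andP [sWmax /subsetPn [v vWmax vW'm1]]] :=
  @exists_exit_step [pred m | Wmax \subset (batch_state m).2] n (subsetT Wmax) Wmax_out.
have vW'm := subsetP sWmax v vWmax.
have W'm_neq0 : (batch_state m).2 != set0 by apply/set0Pn; exists v.
apply: le_trans (rho_le_degW_max Wmax_max vWmax) _.
apply: le_trans (degWS v sWmax) _.
apply: le_trans (degW_removed_le vW'm vW'm1) _.
rewrite ler_wpM2l ?mulr_ge0 ?addr_ge0 ?ler0n //.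
exact: le_trans (rho_batch_state2_le W'm_neq0) (rho_batch_state1_homo (ltnW le_mn)).
Qed.

End Batch.
End Degrees.

Theorem lemmaF4 (V E : finType) (R : realFieldType)
  (src dst : E -> V) (time : E -> R)
  (k l : nat) (mot : l.-tuple ('I_k * 'I_k)) (delta : R)
  (tau : l.-tuple E -> R) (xi : R) :
  injective time ->
  (forall e, 0 < time e) ->
  (2 <= k)%N -> (2 <= l)%N ->
  motif_weakly_connected mot ->
  0 < delta ->
  (forall S, is_instance src dst time mot delta S -> 0 < tau S) ->
  0 < xi ->
  (* in every iteration L(W') is nonempty *)
  (forall n, let W' := (batch_state src dst time mot delta tau xi n).2 in
     W' != set0 -> Lset src dst time mot delta tau xi W' != set0)
  (* the procedure terminates *)
  /\ (exists n, (batch_state src dst time mot delta tau xi n).2 = set0)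
  (* the output W satisfies rho(W) >= OPT / (k (1 + xi)) *)
  /\ (forall n, (batch_state src dst time mot delta tau xi n).2 = set0 ->
       forall W0 : {set V}, W0 != set0 ->
         rho src dst time mot delta tau W0 / (k%:R * (1 + xi))
           <= rho src dst time mot delta tau (batch_state src dst time mot delta tau xi n).1).
Proof.
move=> _ _ k_ge2 l_ge2 _ _ tau_gt0 xi_gt0.
have l_gt0 : (0 < l)%N by exact: ltnW.
have xi_ge0 := ltW xi_gt0.
split; [|split].
- by move=> n /= /(Lset_neq0 tau_gt0 xi_ge0).
- by exists #|V|; exact: (batch_terminates tau_gt0 xi_ge0).
- move=> n W'n0 W0 W0_neq0.
  pose nonempty := [pred A : {set V} | A != set0].
  have [Wmax Wmax_neq0 Wmax_max] :=
    arg_maxP (rho src dst time mot delta tau) (W0_neq0 : nonempty W0).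
  have c_gt0 : 0 < k%:R * (1 + xi) :> R by rewrite mulr_gt0 ?addr_gt0 // ltr0n ltnW.
  rewrite ler_pdivrMr // mulrC.
  apply: le_trans (Wmax_max _ W0_neq0) _.
  exact: (rho_max_le_batch tau_gt0 l_gt0 xi_ge0 Wmax_neq0 Wmax_max W'n0).
Qed.
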